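(* Let $G_0$ be a group generated by two elements $x,y$ such that (1) $x^4=y^4=1$; (2) $[x,y]^2=[[x,y],x]^2=[[x,y],y]^2=1$; (3) $[[x,y],x]$ and $[[x,y],y]$ each commute with $x$ and with $y$. Then (a) $yx=xy[x,y]$, (b) $[x,y]x=x[x,y][[x,y],x]$, (c) $[x,y]y=y[x,y][[x,y],y]$, and $|G_0|\le128$. If in addition $y^2=1$, then $[[x,y],y]=1$ and $|G_0|\le 32$.
   Context: Commutators are $[\sigma,\tau]=\sigma^{-1}\tau^{-1}\sigma\tau$. *)

From Stdlib Require Import List.

Set Implicit Arguments.

Record is_group (G : Type) (mul : G -> G -> G) (one : G) (inv : G -> G) : Prop := {
  grp_assoc : forall a b c, mul a (mul b c) = mul (mul a b) c;
  grp_mul1g : forall a, mul one a = a;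
  grp_mulg1 : forall a, mul a one = a;
  grp_mulVg : forall a, mul (inv a) a = one;
  grp_mulgV : forall a, mul a (inv a) = one
}.

Fixpoint gpow (G : Type) (mul : G -> G -> G) (one : G) (a : G) (n : nat) : G :=
  match n with
  | O => one
  | S k => mul a (gpow mul one a k)
  end.

Definition comm (G : Type) (mul : G -> G -> G) (inv : G -> G) (a b : G) : G :=
  mul (mul (inv a) (inv b)) (mul a b).

Inductive generated (G : Type) (mul : G -> G -> G) (one : G) (inv : G -> G)
    (x y : G) : G -> Prop :=
  | gen_one : generated mul one inv x y one
  | gen_x : generated mul one inv x y x
  | gen_y : generated mul one inv x y y
  | gen_mul : forall a b, generated mul one inv x y a ->
      generated mul one inv x y b -> generated mul one inv x y (mul a b)
  | gen_inv : forall a, generated mul one inv x y a ->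
      generated mul one inv x y (inv a).

Definition card_le (G : Type) (n : nat) : Prop :=
  exists l : list G, length l <= n /\ forall g : G, In g l.

(* The identities (a)-(c) are instances of a b = b a [a, b], using [y, x] = [x, y]^-1 = [x, y].
   Put c = [x, y], a = [c, x], b = [c, y]. As a and b commute with both generators they are
   central, and the relations c x = x c a, c y = y c b let y move past powers of x and powers
   of c move past powers of y at the cost of central factors. Hence the words
   x^i y^j c^k a^l b^m are closed under left multiplication by x and y, so they exhaust the
   group, and reducing exponents modulo 4, 4, 2, 2, 2 leaves at most 128 of them. If y^2 = 1
   then c y = x^-1 y x is an involution, so b = (c y)^2 = 1 and the count drops to
   4 * 2 * 2 * 2 = 32. *)

From Stdlib Require Import List Arith Lia.

Set Implicit Arguments.

Lemma card_le_grid (G : Type) (f : nat -> nat -> nat -> nat -> nat -> G) n1 n2 n3 n4 n5 :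
  (forall g, exists i j k l m,
     i < n1 /\ j < n2 /\ k < n3 /\ l < n4 /\ m < n5 /\ g = f i j k l m) ->
  card_le G (n1 * n2 * n3 * n4 * n5).
Proof.
  intro Hf.
  exists (map (fun '(i, j, k, l, m) => f i j k l m)
    (list_prod (list_prod (list_prod (list_prod
       (seq 0 n1) (seq 0 n2)) (seq 0 n3)) (seq 0 n4)) (seq 0 n5))).
  split.
  - now rewrite length_map, !length_prod, !length_seq.
  - intro g. destruct (Hf g) as (i & j & k & l & m & Hi & Hj & Hk & Hl & Hm & ->).
    apply in_map_iff. exists (i, j, k, l, m). split; [reflexivity|].
    rewrite !in_prod_iff, !in_seq. lia.
Qed.

Section Group.

Variables (G : Type) (mul : G -> G -> G) (one : G) (inv : G -> G).
Hypothesis Hg : is_group mul one inv.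

Local Notation "a ⋅ b" := (mul a b) (at level 40, left associativity).
Local Notation "a ^+ n" := (gpow mul one a n) (at level 30, right associativity).
Local Notation "[~ a , b ]" := (comm mul inv a b).

Let mulgA := grp_assoc Hg.
Let mul1g := grp_mul1g Hg.
Let mulg1 := grp_mulg1 Hg.
Let mulVg := grp_mulVg Hg.
Let mulgV := grp_mulgV Hg.

Lemma mulgK a u : u ⋅ a ⋅ inv a = u.
Proof. now rewrite <- mulgA, mulgV, mulg1. Qed.

Lemma invg_unique a b : a ⋅ b = one -> inv a = b.
Proof. intro Hab. now rewrite <- (mul1g b), <- (mulVg a), <- mulgA, Hab, mulg1. Qed.

Lemma invgK a : inv (inv a) = a.
Proof. apply invg_unique, mulVg. Qed.

Lemma invMg a b : inv (a ⋅ b) = inv b ⋅ inv a.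
Proof. apply invg_unique. now rewrite <- mulgA, (mulgA b), mulgV, mul1g, mulgV. Qed.

Lemma invg1 : inv one = one.
Proof. apply invg_unique, mul1g. Qed.

Lemma expgSr a n : a ^+ S n = a ^+ n ⋅ a.
Proof.
  induction n as [|n IH]; simpl in *.
  - now rewrite mulg1, mul1g.
  - now rewrite IH at 1; rewrite mulgA.
Qed.

Lemma expgD a n m : a ^+ (n + m) = a ^+ n ⋅ a ^+ m.
Proof.
  induction n as [|n IH]; simpl.
  - now rewrite mul1g.
  - now rewrite IH, mulgA.
Qed.

Lemma expg_mod a p n : a ^+ p = one -> a ^+ n = a ^+ (n mod p).
Proof.
  intro Hp.
  assert (Hmul : forall q, a ^+ (p * q) = one).
  { induction q as [|q IH]; [now rewrite Nat.mul_0_r|].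
    now rewrite Nat.mul_succ_r, expgD, IH, Hp, mul1g. }
  now rewrite (Nat.div_mod_eq n p) at 1; rewrite expgD, Hmul, mul1g.
Qed.

Lemma expg_reduce a p n : 0 < p -> a ^+ p = one -> exists r, r < p /\ a ^+ n = a ^+ r.
Proof.
  intros Hp0 Hp. exists (n mod p). split.
  - apply Nat.mod_upper_bound; lia.
  - now apply expg_mod.
Qed.

Lemma invg_expg a p : 0 < p -> a ^+ p = one -> inv a = a ^+ (p - 1).
Proof.
  intros Hp0 Hp. apply invg_unique.
  now replace p with (S (p - 1)) in Hp by lia.
Qed.

Lemma commgC a b : a ⋅ b = b ⋅ a ⋅ [~ a, b].
Proof. unfold comm. now rewrite !mulgA, mulgK, mulgV, mul1g. Qed.

Lemma invg_comm a b : inv [~ a, b] = [~ b, a].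
Proof. unfold comm. now rewrite !invMg, !invgK, !mulgA. Qed.

Definition central z := forall g, z ⋅ g = g ⋅ z.

Lemma central_expg t n : central t -> central (t ^+ n).
Proof.
  intros Ht g. induction n as [|n IH]; simpl.
  - now rewrite mulg1, mul1g.
  - now rewrite <- mulgA, IH, !mulgA, Ht.
Qed.

Lemma mulgAC_central u t v : central t -> u ⋅ t ⋅ v = u ⋅ v ⋅ t.
Proof. intro Ht. now rewrite <- !mulgA, Ht. Qed.

Lemma expg_twist1 z w t i : central t -> z ⋅ w = w ⋅ z ⋅ t ->
  z ^+ i ⋅ w = w ⋅ z ^+ i ⋅ t ^+ i.
Proof.
  intros Ht Hzw. induction i as [|i IH]; simpl.
  - now rewrite mulg1, !mul1g.
  - rewrite <- mulgA, IH, !mulgA, Hzw.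
    now rewrite (mulgAC_central _ _ Ht), <- !mulgA.
Qed.

Lemma expg_twist z w t i j : central t -> z ⋅ w = w ⋅ z ⋅ t ->
  z ^+ i ⋅ w ^+ j = w ^+ j ⋅ z ^+ i ⋅ t ^+ (i * j).
Proof.
  intros Ht Hzw. induction j as [|j IH]; simpl.
  - now rewrite Nat.mul_0_r, !mulg1, mul1g.
  - rewrite Nat.mul_succ_r, expgD, mulgA, (expg_twist1 _ Ht Hzw).
    rewrite (mulgAC_central _ _ (central_expg i Ht)), <- (mulgA w), IH.
    now rewrite !mulgA.
Qed.

Lemma generated_left_ind (P : G -> Prop) x y px py :
  0 < px -> x ^+ px = one -> 0 < py -> y ^+ py = one ->
  P one -> (forall s, P s -> P (x ⋅ s)) -> (forall s, P s -> P (y ⋅ s)) ->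
  forall g, generated mul one inv x y g -> P g.
Proof.
  intros Hpx Hx Hpy Hy P1 Px Py.
  assert (Ppow : forall z n, (forall s, P s -> P (z ⋅ s)) ->
                 forall s, P s -> P (z ^+ n ⋅ s)).
  { intros z n Pz. induction n as [|n IH]; intros s Hs; simpl.
    - now rewrite mul1g.
    - rewrite <- mulgA. auto. }
  assert (Pgen : forall g, generated mul one inv x y g ->
                 forall s, P s -> P (g ⋅ s) /\ P (inv g ⋅ s)).
  { induction 1 as [| | |g h _ IHg _ IHh|g _ IHg]; intros s Hs.
    - now rewrite invg1, mul1g.
    - rewrite (invg_expg _ Hpx Hx). auto.
    - rewrite (invg_expg _ Hpy Hy). auto.
    - rewrite invMg, <- !mulgA.
      split; [apply (IHg _ (proj1 (IHh s Hs))) | apply (IHh _ (proj2 (IHg s Hs)))].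
    - rewrite invgK. now destruct (IHg s Hs). }
  intros g Hgen. rewrite <- (mulg1 g). now apply Pgen.
Qed.

Lemma comm_comm_involution x y :
  y ^+ 2 = one -> [~ x, y] ^+ 2 = one -> [~ [~ x, y], y] = one.
Proof.
  intros Hy2 Hc2. simpl in Hy2, Hc2. rewrite mulg1 in Hy2, Hc2.
  assert (Hcy : [~ x, y] ⋅ y = inv x ⋅ y ⋅ x).
  { unfold comm. now rewrite (invg_unique Hy2), !mulgA, <- (mulgA _ y y), Hy2, mulg1. }
  unfold comm at 1. rewrite (invg_unique Hy2), (invg_unique Hc2), Hcy.
  now rewrite !mulgA, mulgK, <- (mulgA _ y y), Hy2, mulg1, mulVg.
Qed.

Section TwoGenerated.

Variables x y : G.
Hypothesis Hgen : forall g, generated mul one inv x y g.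

Local Notation c := [~ x, y].
Local Notation a := [~ c, x].
Local Notation b := [~ c, y].

Hypothesis Hc2 : c ^+ 2 = one.
Hypotheses (Hax : a ⋅ x = x ⋅ a) (Hay : a ⋅ y = y ⋅ a).
Hypotheses (Hbx : b ⋅ x = x ⋅ b) (Hby : b ⋅ y = y ⋅ b).

Lemma central_of_generators z : z ⋅ x = x ⋅ z -> z ⋅ y = y ⋅ z -> central z.
Proof.
  intros Hzx Hzy g. induction (Hgen g) as [| | |g h _ IHg _ IHh|g _ IHg]; auto.
  - now rewrite mulg1, mul1g.
  - now rewrite mulgA, IHg, <- !mulgA, IHh.
  - rewrite <- (mulgK g (inv g ⋅ z)), <- (mulgA (inv g)), IHg.
    now rewrite mulgA, mulVg, mul1g.
Qed.

Let Ha : central a := central_of_generators Hax Hay.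
Let Hb : central b := central_of_generators Hbx Hby.

Lemma mul_yx : y ⋅ x = x ⋅ y ⋅ c.
Proof.
  rewrite (commgC y x), <- invg_comm. f_equal.
  apply invg_unique. rewrite <- Hc2. simpl. now rewrite mulg1.
Qed.

Lemma mul_y_expgx i : exists k l, y ⋅ x ^+ i = x ^+ i ⋅ y ⋅ c ^+ k ⋅ a ^+ l.
Proof.
  induction i as [|i (k & l & IH)].
  - exists 0, 0. simpl. now rewrite !mulg1, mul1g.
  - exists (S k), (k + l).
    rewrite expgSr, mulgA, IH, (mulgAC_central _ _ (central_expg l Ha)).
    rewrite <- (mulgA _ (c ^+ k) x), (expg_twist1 k Ha (commgC c x)), !mulgA.
    rewrite <- (mulgA _ y x), mul_yx, !mulgA, <- (expgSr x i), expgD.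
    simpl. now rewrite !mulgA.
Qed.

Definition in_normal_form g :=
  exists i j k l m, g = x ^+ i ⋅ y ^+ j ⋅ c ^+ k ⋅ a ^+ l ⋅ b ^+ m.

Lemma normal_form_mul_x g : in_normal_form g -> in_normal_form (x ⋅ g).
Proof.
  intros (i & j & k & l & m & ->). exists (S i), j, k, l, m.
  simpl. now rewrite !mulgA.
Qed.

Lemma normal_form_mul_y g : in_normal_form g -> in_normal_form (y ⋅ g).
Proof.
  intros (i & j & k & l & m & ->). destruct (mul_y_expgx i) as (k0 & l0 & Hyx).
  exists i, (S j), (k0 + k), (l + l0), (m + k0 * j).
  rewrite !mulgA, Hyx, !expgD. cbn [gpow]. rewrite !mulgA.
  rewrite !(mulgAC_central _ _ (central_expg l0 Ha)).
  rewrite <- (mulgA _ (c ^+ k0) (y ^+ j)), (expg_twist k0 j Hb (commgC c y)), !mulgA.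
  now rewrite !(mulgAC_central _ _ (central_expg (k0 * j) Hb)).
Qed.

Lemma normal_form_all px py g :
  0 < px -> x ^+ px = one -> 0 < py -> y ^+ py = one -> in_normal_form g.
Proof.
  intros Hpx Hx Hpy Hy.
  apply (generated_left_ind in_normal_form Hpx Hx Hpy Hy);
    auto using normal_form_mul_x, normal_form_mul_y.
  exists 0, 0, 0, 0, 0. simpl. now rewrite !mulg1.
Qed.

Lemma card_le_of_orders px py pa pb :
  0 < px -> x ^+ px = one -> 0 < py -> y ^+ py = one ->
  0 < pa -> a ^+ pa = one -> 0 < pb -> b ^+ pb = one ->
  card_le G (px * py * 2 * pa * pb).
Proof.
  intros Hpx Hx Hpy Hy Hpa Hap Hpb Hbp.
  apply card_le_grid with (f := fun i j k l m => x ^+ i ⋅ y ^+ j ⋅ c ^+ k ⋅ a ^+ l ⋅ b ^+ m).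
  intro g. destruct (normal_form_all g Hpx Hx Hpy Hy) as (i & j & k & l & m & ->).
  destruct (expg_reduce _ i Hpx Hx) as (i' & Hi & ->).
  destruct (expg_reduce _ j Hpy Hy) as (j' & Hj & ->).
  destruct (expg_reduce _ k Nat.lt_0_2 Hc2) as (k' & Hk & ->).
  destruct (expg_reduce _ l Hpa Hap) as (l' & Hl & ->).
  destruct (expg_reduce _ m Hpb Hbp) as (m' & Hm & ->).
  now exists i', j', k', l', m'.
Qed.

End TwoGenerated.
End Group.

Theorem proposition2p7 (G : Type) (mul : G -> G -> G) (one : G) (inv : G -> G)
  (x y : G)
  (Hgrp : is_group mul one inv)
  (Hgen : forall g : G, generated mul one inv x y g)
  (Hx4 : gpow mul one x 4 = one)
  (Hy4 : gpow mul one y 4 = one)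
  (Hc2 : gpow mul one (comm mul inv x y) 2 = one)
  (Hcx2 : gpow mul one (comm mul inv (comm mul inv x y) x) 2 = one)
  (Hcy2 : gpow mul one (comm mul inv (comm mul inv x y) y) 2 = one)
  (Hcx_x : mul (comm mul inv (comm mul inv x y) x) x
           = mul x (comm mul inv (comm mul inv x y) x))
  (Hcx_y : mul (comm mul inv (comm mul inv x y) x) y
           = mul y (comm mul inv (comm mul inv x y) x))
  (Hcy_x : mul (comm mul inv (comm mul inv x y) y) x
           = mul x (comm mul inv (comm mul inv x y) y))
  (Hcy_y : mul (comm mul inv (comm mul inv x y) y) y
           = mul y (comm mul inv (comm mul inv x y) y)) :
  mul y x = mul (mul x y) (comm mul inv x y) /\
  mul (comm mul inv x y) x
    = mul (mul x (comm mul inv x y)) (comm mul inv (comm mul inv x y) x) /\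
  mul (comm mul inv x y) y
    = mul (mul y (comm mul inv x y)) (comm mul inv (comm mul inv x y) y) /\
  card_le G 128 /\
  (gpow mul one y 2 = one ->
     comm mul inv (comm mul inv x y) y = one /\ card_le G 32).
Proof.
  pose proof (card_le_of_orders Hgrp Hgen Hc2 Hcx_x Hcx_y Hcy_x Hcy_y) as Hcard.
  split; [exact (mul_yx Hgrp x y Hc2)|].
  split; [exact (commgC Hgrp _ x)|].
  split; [exact (commgC Hgrp _ y)|].
  split; [apply (Hcard 4 4 2 2); lia || assumption|].
  intro Hy2.
  pose proof (comm_comm_involution Hgrp x y Hy2 Hc2) as Hb1.
  split; [exact Hb1|].
  apply (Hcard 4 2 2 1); try lia; try assumption.
  rewrite Hb1. apply (grp_mulg1 Hgrp).
Qed.
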